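(* Let $d\ge 7$ and let $G$ be a $d$-regular graph with girth $g(G)\ge 5$. Then for every vertex $x\in V(G)$ there exists a proper $(d+1)$-coloring $c:V(G)\to[d+1]$ of $G$ in which $x$ and at least four of the neighbors of $x$ are b-vertices, i.e. for each of these five vertices $v$ every color of $[d+1]$ appears on $N[v]$.
   Context: $[k]=\{1,\dots,k\}$. $N[v]$ denotes the closed neighborhood of $v$. The girth $g(G)$ is the length of a shortest cycle in $G$. In a (proper) coloring $c$ with color set $[k]$, a vertex $v$ is a b-vertex if $\{c(u):u\in N[v]\}=[k]$. *)

From mathcomp Require Import all_boot.
Set Implicit Arguments. Unset Strict Implicit. Unset Printing Implicit Defensive.

Definition simple_graph (T : finType) (e : rel T) : Prop :=
  symmetric e /\ irreflexive e.

Definition nbhd (T : finType) (e : rel T) (v : T) : {set T} := [set u | e v u].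
Definition cnbhd (T : finType) (e : rel T) (v : T) : {set T} := v |: nbhd e v.

Definition regular (T : finType) (e : rel T) (d : nat) : Prop :=
  forall v : T, #|nbhd e v| = d.

Definition has_cycle_of_length (T : finType) (e : rel T) (k : nat) : Prop :=
  3 <= k /\ exists s : seq T, [/\ size s = k, uniq s & cycle e s].

(* girth(G) >= g : G has no cycle of length < g (acyclic graphs have
   infinite girth). *)
Definition girth_ge (T : finType) (e : rel T) (g : nat) : Prop :=
  forall k, k < g -> ~ has_cycle_of_length e k.

(* proper coloring with colors 'I_k (standing for [k]) *)
Definition proper_coloring (T : finType) (e : rel T) (k : nat)
  (c : T -> 'I_k) : Prop :=
  forall u v, e u v -> c u != c v.

Definition b_vertex (T : finType) (e : rel T) (k : nat)
  (c : T -> 'I_k) (v : T) : Prop :=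
  forall i : 'I_k, exists2 u, u \in cnbhd e v & c u = i.

(* Colour N[x] rainbow and fix four neighbours y_1, ..., y_4 of x.  As the girth is at least 5,
   the sets N(y_i) \ {x} are pairwise disjoint independent sets of size d - 1, and the only
   vertex of N[x] adjacent to N(y_i) \ {x} is y_i.  Colour these sets one after another, each
   bijectively with the d - 1 colours other than c(x) and c(y_i), so that every y_i becomes a
   b-vertex.  With no 4-cycles, a vertex of N(y_i) \ {x} has at most one neighbour in each earlier
   set, so at most i - 1 <= 3 colours are forbidden at it, and each colour is forbidden at no more
   than 3 of its vertices; since d - 1 >= 6, transpositions repair any bijection.  Finally the
   partial colouring extends greedily, as d + 1 colours exceed every degree. *)

From mathcomp Require Import all_boot zify fingroup perm.
Set Implicit Arguments. Unset Strict Implicit. Unset Printing Implicit Defensive.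

Section FiniteSets.

Variable T : finType.

Lemma card_setI_bigcup_le1 (I : eqType) (r : seq I) (P : pred I) (F : I -> {set T})
    (X : {set T}) :
  {in r, forall i, P i -> #|X :&: F i| <= 1} ->
  #|X :&: \bigcup_(i <- r | P i) F i| <= \sum_(i <- r | P i) 1.
Proof.
move=> XF_le1; rewrite big_seq_cond [leqRHS]big_seq_cond.
apply: (big_ind2 (fun S n => #|X :&: S| <= n)) => [||i /andP[]]; last exact: XF_le1.
- by rewrite setI0 cards0.
- move=> S1 n1 S2 n2 le1 le2; rewrite setIUr.
  exact: leq_trans (leq_card_setU _ _) (leq_add le1 le2).
Qed.

Lemma exists_inj_in (K : finType) (k0 : K) (A : {set T}) (B : {set K}) :
  #|A| <= #|B| ->
  exists2 f : T -> K, {in A &, injective f} & {in A, forall a, f a \in B}.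
Proof.
move=> leAB; pose f a := nth k0 (enum B) (index a (enum A)).
have index_lt a : a \in A -> index a (enum A) < size (enum B).
  by move=> Aa; rewrite -cardE (leq_trans _ leAB) // cardE index_mem mem_enum.
exists f => [a a' Aa Aa' /eqP | a Aa]; last by rewrite -mem_enum mem_nth ?index_lt.
rewrite nth_uniq ?index_lt ?enum_uniq // => /eqP eq_index.
by rewrite -(nth_index a (_ : a \in enum A)) ?mem_enum // eq_index nth_index ?mem_enum.
Qed.

Lemma card_lt_not_subset (A B : {set T}) : #|B| < #|A| -> ~~ (A \subset B).
Proof. by rewrite ltnNge; apply: contra; apply: subset_leq_card. Qed.

Lemma injective_setU (K : Type) (f : T -> K) (A B : {set T}) :
  {in A &, injective f} -> {in B &, injective f} ->
  {in A & B, forall a b, f a <> f b} -> {in A :|: B &, injective f}.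
Proof.
move=> injA injB neqAB u v /setUP[Au|Bu] /setUP[Av|Bv] fuv; try by [apply: injA | apply: injB].
- by case: (neqAB u v).
- by case: (neqAB v u).
Qed.

End FiniteSets.

Section Repair.

Variables (T K : finType) (A : {set T}) (bad : T -> K -> bool) (m : nat).
Hypotheses (A_large : m.*2 <= #|A|)
           (bad_colors : {in A, forall a, #|[set k | bad a k]| <= m})
           (bad_elements : forall k, #|[set a in A | bad a k]| <= m).

Lemma exists_swap_partner (c : T -> K) a :
  {in A &, injective c} -> a \in A -> bad a (c a) ->
  exists2 b, b \in A & ~~ bad a (c b) && ~~ bad b (c a).
Proof.
move=> injc Aa bad_a.
pose X := [set b in A | bad a (c b)]; pose Y := [set b in A | bad b (c a)].
have cardX : #|X| <= m.
  rewrite -(card_in_imset (f := c)); last by move=> u v /setIdP[Au _] /setIdP[Av _]; apply: injc.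
  apply: leq_trans (bad_colors Aa); apply: subset_leq_card.
  by apply/subsetP=> _ /imsetP[b /setIdP[_ bad_ab] ->]; rewrite inE.
have cardY : #|Y| <= m by apply: bad_elements.
have cardXY : 0 < #|X :&: Y| by apply/card_gt0P; exists a; rewrite !inE Aa bad_a.
have /subsetPn[b Ab] : ~~ (A \subset X :|: Y).
  by apply: card_lt_not_subset; move: (cardsUI X Y); lia.
by rewrite !inE Ab negb_or; exists b.
Qed.

Lemma repair_injection (c : T -> K) :
  {in A &, injective c} ->
  exists c' : T -> K, [/\ {in A &, injective c'}, {in [predC A], c' =1 c},
    {in A, forall a, c' a \in c @: A} & {in A, forall a, ~~ bad a (c' a)}].
Proof.
move: (ltnSn #|[set a in A | bad a (c a)]|); move: {2}_.+1 => n.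
elim: n c => // n IHn c lt_bad injc.
have [no_bad | [a /setIdP[Aa bad_a]]] := set_0Vmem [set a in A | bad a (c a)].
  exists c; split=> // [a Aa | a Aa]; first exact: imset_f.
  by apply/negP=> bad_a; move/setP/(_ a): no_bad; rewrite !inE Aa bad_a.
have [b Ab /andP[good_ab good_ba]] := exists_swap_partner injc Aa bad_a.
have tpermA z : z \in A -> tperm a b z \in A by case: tpermP => // ->.
pose c1 z := c (tperm a b z).
have injc1 : {in A &, injective c1}.
  by move=> u v Au Av /(injc _ _ (tpermA _ Au) (tpermA _ Av)) /perm_inj.
have lt_bad1 : #|[set z in A | bad z (c1 z)]| < n.
  have sub_bad : [set z in A | bad z (c1 z)] \subset [set z in A | bad z (c z)] :\ a.
    apply/subsetP => z /setIdP[Az]; rewrite /c1; case: tpermP => [-> | -> | neq_za neq_zb].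
    - by rewrite (negbTE good_ab).
    - by rewrite (negbTE good_ba).
    - by move=> bad_z; rewrite !inE Az bad_z !andbT; apply/eqP.
  apply: leq_ltn_trans (subset_leq_card sub_bad) _.
  by move: lt_bad; rewrite (cardsD1 a) inE Aa bad_a.
have [c' [injc' c'_out c'_im c'_good]] := IHn c1 lt_bad1 injc1.
exists c'; split=> // [z | z Az].
- rewrite inE => nAz; rewrite c'_out ?inE // /c1 tpermD //; by apply: contraNneq nAz => <-.
- by have /imsetP[w Aw ->] := c'_im z Az; apply: imset_f; apply: tpermA.
Qed.

End Repair.

Section Greedy.

Variables (T : finType) (e : rel T) (k : nat).
Hypotheses (e_sym : symmetric e) (e_irr : irreflexive e)
           (deg_lt : forall v, #|nbhd e v| < k).

Lemma extend_proper_coloring (S : {set T}) (c : T -> 'I_k) :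
  {in S &, forall u v, e u v -> c u != c v} ->
  exists2 c' : T -> 'I_k, proper_coloring e c' & {in S, c' =1 c}.
Proof.
move: {2}#|~: S| (erefl #|~: S|) => n; elim: n S c => [|n IHn] S c cardSC properS.
  have S_full z : z \in S by rewrite -[_ \in S]negbK -in_setC (cards0_eq cardSC) in_set0.
  by exists c => // u v; apply: properS; rewrite S_full.
have /set0Pn[v] : ~: S != set0 by rewrite -card_gt0 cardSC.
rewrite inE => nSv.
have /subsetPn[col _ free_col] : ~~ ([set: 'I_k] \subset c @: nbhd e v).
  by apply: card_lt_not_subset; rewrite cardsT card_ord (leq_ltn_trans (leq_imset_card _ _)).
pose c1 z := if z == v then col else c z.
have cardSC1 : #|~: (v |: S)| = n.
  by move: cardSC; rewrite (cardsD1 v) inE nSv setCU setIC -setDE add1n => -[].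
have properS1 : {in v |: S &, forall u w, e u w -> c1 u != c1 w}.
  have new_edge u : u \in S -> e v u -> col != c u.
    by move=> Su evu; apply: contraNneq free_col => ->; rewrite imset_f ?inE.
  have neq_v z : z \in S -> (z == v) = false.
    by move=> Sz; apply: contraNF nSv => /eqP <-.
  move=> u w /setU1P[-> | Su] /setU1P[-> | Sw] euw; rewrite /c1 ?eqxx ?neq_v //.
  - by rewrite e_irr in euw.
  - exact: new_edge.
  - by rewrite eq_sym; apply: new_edge; rewrite // e_sym.
  - exact: properS.
have [c' proper_c' eq_c'] := IHn _ _ cardSC1 properS1.
exists c' => // z Sz; rewrite eq_c' ?inE ?Sz ?orbT // /c1.
by case: eqP => // eq_zv; rewrite -eq_zv Sz in nSv.
Qed.

End Greedy.

Section Girth5.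

Variables (T : finType) (e : rel T).
Hypotheses (e_sym : symmetric e) (e_irr : irreflexive e) (girth5 : girth_ge e 5).

Lemma adj_neq u v : e u v -> u != v.
Proof. by apply: contraTneq => ->; rewrite e_irr. Qed.

Lemma no_triangle u v w : e u v -> e v w -> e w u -> False.
Proof.
move=> euv evw ewu; apply: (girth5 (k := 3)) => //; split=> //.
exists [:: u; v; w]; split=> //=; last by rewrite euv evw ewu.
by rewrite !inE negb_or (adj_neq euv) (adj_neq evw) eq_sym (adj_neq ewu).
Qed.

Lemma card_common_nbhd u v : u != v -> #|nbhd e u :&: nbhd e v| <= 1.
Proof.
move=> neq_uv; apply/card_le1_eqP => w1 w2; rewrite !inE => /andP[euw1 evw1] /andP[euw2 evw2].
apply/eqP; apply: contraT => neq_w; case: (girth5 (k := 4)) => //; split=> //.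
exists [:: u; w1; v; w2]; split=> //=; last by rewrite euw1 evw2 e_sym evw1 e_sym euw2.
rewrite !inE !negb_or neq_uv (adj_neq euw1) (adj_neq euw2) (adj_neq evw2).
by rewrite eq_sym (adj_neq evw1) eq_sym neq_w.
Qed.

Lemma b_vertex_of_injective d (c : T -> 'I_d.+1) v :
  #|nbhd e v| = d -> {in cnbhd e v &, injective c} -> b_vertex e c v.
Proof.
move=> deg_v injc i.
have : c @: cnbhd e v = setT.
  apply/eqP; rewrite eqEcard subsetT cardsT card_ord (card_in_imset injc).
  by rewrite /cnbhd cardsU1 deg_v inE e_irr add1n ltnSn.
by move/setP/(_ i); rewrite inE => /imsetP[u Nu ->]; exists u.
Qed.

Section AroundVertex.

Variable x : T.

Definition outer_nbhd y := nbhd e y :\ x.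

Definition outer_union ys := \bigcup_(y <- ys) outer_nbhd y.

Lemma outer_nbhd_sub y : outer_nbhd y \subset cnbhd e y.
Proof. by apply/subsetP=> z; rewrite !inE => /andP[_ ->]; rewrite orbT. Qed.

Lemma card_outer_nbhd d y : regular e d -> e x y -> #|outer_nbhd y| = d.-1.
Proof. by move=> e_reg exy; move: (cardsD1 x (nbhd e y)); rewrite e_reg inE e_sym exy => ->. Qed.

Lemma cnbhd_outer y : e x y -> cnbhd e y = [set y; x] :|: outer_nbhd y.
Proof.
move=> exy; apply/setP=> z; case: (eqVneq z x) => [-> | neq_zx].
  by rewrite !inE (e_sym y x) exy eqxx !orbT.
by rewrite !inE neq_zx (negbTE neq_zx) orbF.
Qed.

Lemma mem_outer_union ys z :
  z \in outer_union ys -> exists2 y, y \in ys & z \in outer_nbhd y.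
Proof. by rewrite /outer_union bigcup_seq => /bigcupP. Qed.

Lemma disjoint_cnbhd_outer u y :
  e x y -> u \in cnbhd e x -> u != y -> [disjoint cnbhd e u & outer_nbhd y].
Proof.
move=> exy Nxu neq_uy; rewrite disjoint_subset; apply/subsetP => z Nuz.
rewrite !inE negb_and negbK -implyNb; apply/implyP => neq_zx; apply/negP => eyz.
have triangle_at w : e x w -> e w y -> False.
  by move=> exw ewy; apply: (no_triangle exw ewy); rewrite e_sym.
move: Nuz Nxu; rewrite !inE => /predU1P[eq_zu | euz] /predU1P[eq_ux | exu].
- by rewrite eq_zu eq_ux eqxx in neq_zx.
- by apply: (triangle_at u exu); rewrite e_sym -eq_zu.
- by apply: (triangle_at z); rewrite -?eq_ux // e_sym.
have /card_le1_eqP/(_ z x) : #|nbhd e u :&: nbhd e y| <= 1 by apply: card_common_nbhd.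
rewrite !inE euz eyz (e_sym u x) exu (e_sym y x) exy => /(_ isT isT) eq_zx.
by rewrite eq_zx eqxx in neq_zx.
Qed.

Lemma disjoint_cnbhd_outer_union u ys :
  {subset ys <= nbhd e x} -> u \in cnbhd e x -> u \notin ys ->
  [disjoint cnbhd e u & outer_union ys].
Proof.
move=> ys_nbhd Nxu u_notin; rewrite disjoint_subset; apply/subsetP => z Nuz.
rewrite inE; apply/negP => /mem_outer_union[y ys_y Oyz].
have exy : e x y by have := ys_nbhd y ys_y; rewrite inE.
have neq_uy : u != y by apply: contraNneq u_notin => ->.
by rewrite (disjointFr (disjoint_cnbhd_outer exy Nxu neq_uy) Nuz) in Oyz.
Qed.

Section PartialColoring.

Variables (d : nat) (c0 : T -> 'I_d.+1).
Hypotheses (e_reg : regular e d) (c0_inj : {in cnbhd e x &, injective c0}).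

Definition precolored ys := cnbhd e x :|: outer_union ys.

Definition partial_coloring ys (c : T -> 'I_d.+1) :=
  [/\ {in cnbhd e x, c =1 c0}, {in ys, forall y, {in cnbhd e y &, injective c}}
    & {in precolored ys &, forall u v, e u v -> c u != c v}].

Lemma partial_coloring_nil : partial_coloring [::] c0.
Proof.
split=> // u v; rewrite /precolored /outer_union big_nil setU0 => Nu Nv euv.
by apply: contraTneq euv => /c0_inj -> //; rewrite e_irr.
Qed.

Definition conflict ys (c : T -> 'I_d.+1) a k :=
  [exists w in outer_union ys, e a w && (c w == k)].

Section Step.

Variables (y : T) (ys : seq T) (c : T -> 'I_d.+1).
Hypotheses (exy : e x y) (ys_nbhd : {subset ys <= nbhd e x}) (y_notin : y \notin ys)
           (c_partial : partial_coloring ys c).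

Let x_cnbhd : x \in cnbhd e x. Proof. by rewrite !inE eqxx. Qed.
Let y_cnbhd : y \in cnbhd e x. Proof. by rewrite !inE exy orbT. Qed.
Let ys_cnbhd y' : y' \in ys -> y' \in cnbhd e x.
Proof. by move=> /ys_nbhd; rewrite !inE => ->; rewrite orbT. Qed.
Let neq_xy : x != y. Proof. exact: adj_neq exy. Qed.
Let neq_y'y y' : y' \in ys -> y' != y. Proof. by move=> ys_y'; apply: contraNneq y_notin => <-. Qed.

Lemma card_conflict_colors a :
  a \in outer_nbhd y -> #|[set k | conflict ys c a k]| <= size ys.
Proof.
move=> Oa; rewrite -sum1_size.
have sub_im : [set k | conflict ys c a k] \subset c @: (nbhd e a :&: outer_union ys).
  apply/subsetP => k; rewrite inE => /exists_inP[w Uw /andP[eaw /eqP <-]].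
  by rewrite imset_f // !inE eaw.
apply: leq_trans (subset_leq_card sub_im) _; apply: leq_trans (leq_imset_card _ _) _.
apply: card_setI_bigcup_le1 => y' ys_y'.
have neq_ay' : a != y'.
  apply: contraTneq Oa => ->.
  by rewrite (disjointFr (disjoint_cnbhd_outer exy (ys_cnbhd ys_y') (neq_y'y ys_y'))) // !inE eqxx.
move=> _; apply: leq_trans _ (card_common_nbhd neq_ay').
by apply/subset_leq_card/setIS; rewrite subD1set.
Qed.

Lemma card_conflict_vertices k :
  #|[set a in outer_nbhd y | conflict ys c a k]| <= size ys.
Proof.
have [_ c_inj _] := c_partial.
pose W := [set w in outer_union ys | c w == k].
have cardW : #|W| <= size ys.
  rewrite -sum1_size /W setIdE setIC; apply: card_setI_bigcup_le1 => y' ys_y' _.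
  apply/card_le1_eqP => w1 w2 /setIP[+ O_w1] /setIP[+ O_w2]; rewrite !inE => /eqP c_w1 /eqP c_w2.
  by apply: (c_inj y' ys_y'); rewrite ?c_w1 ?c_w2 //; apply: (subsetP (outer_nbhd_sub y')).
have sub_nbhd : [set a in outer_nbhd y | conflict ys c a k]
                  \subset outer_nbhd y :&: \bigcup_(w in W) nbhd e w.
  apply/subsetP => a /setIdP[Oa /exists_inP[w Uw /andP[eaw ckw]]].
  by rewrite inE Oa; apply/bigcupP; exists w; rewrite ?inE ?Uw // e_sym.
apply: leq_trans (subset_leq_card sub_nbhd) _; apply: leq_trans cardW; rewrite -[#|W|]sum1_card.
apply: card_setI_bigcup_le1 => w _ Ww.
have neq_yw : y != w.
  apply: contraTneq Ww => <-; rewrite inE.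
  by rewrite (disjointFr (disjoint_cnbhd_outer_union ys_nbhd y_cnbhd y_notin)) // !inE eqxx.
apply: leq_trans _ (card_common_nbhd neq_yw).
by apply/subset_leq_card/setSI; rewrite subD1set.
Qed.

Section Repaired.

Variable c' : T -> 'I_d.+1.
Hypotheses (c'_out : {in [predC outer_nbhd y], c' =1 c})
           (c'_inj : {in outer_nbhd y &, injective c'})
           (c'_new : {in outer_nbhd y, forall a, c' a \notin [set c0 x; c0 y]})
           (c'_free : {in outer_nbhd y, forall a, ~~ conflict ys c a (c' a)}).

Let notin_outer u z : u \in cnbhd e x -> u != y -> z \in cnbhd e u -> z \notin outer_nbhd y.
Proof.
by move=> Nxu neq_uy Nuz; rewrite (disjointFr (disjoint_cnbhd_outer exy Nxu neq_uy) Nuz).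
Qed.

Let c'_cnbhd u z : u \in x :: ys -> z \in cnbhd e u -> c' z = c z.
Proof.
move=> /predU1P[-> | ys_u] Nuz; apply: c'_out; rewrite inE.
  exact: notin_outer Nuz.
exact: notin_outer (ys_cnbhd ys_u) (neq_y'y ys_u) Nuz.
Qed.

Let c'_precolored z : z \in precolored ys -> c' z = c z.
Proof.
case/setUP => [Nxz | /mem_outer_union[y' ys_y' Oz]]; first exact: (c'_cnbhd (mem_head x ys)).
apply: (c'_cnbhd (u := y')); first by rewrite in_cons ys_y' orbT.
exact: (subsetP (outer_nbhd_sub y')).
Qed.

Lemma injective_cnbhd_cons : {in y :: ys, forall y', {in cnbhd e y' &, injective c'}}.
Proof.
have [c_c0 c_inj _] := c_partial.
have c'_c0 z : z \in [set y; x] -> c' z = c0 z.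
  by move=> /set2P[] ->; rewrite (c'_cnbhd (mem_head x ys)) ?c_c0.
move=> y'; rewrite in_cons => /predU1P[-> | ys_y']; last first.
  have xys_y' : y' \in x :: ys by rewrite in_cons ys_y' orbT.
  by move=> u v Nu Nv; rewrite !(c'_cnbhd xys_y') //; exact: (c_inj y' ys_y').
rewrite (cnbhd_outer exy); apply: injective_setU => // [u v Nu Nv | u a Nu Oa].
  have yx_cnbhd : [set y; x] \subset cnbhd e x by apply/subsetP => z /set2P[] ->.
  by rewrite !c'_c0 //; apply: c0_inj; apply: (subsetP yx_cnbhd).
apply/eqP; apply: contraNneq (c'_new Oa) => <-.
by rewrite c'_c0 //; move: Nu => /set2P[] ->; rewrite !inE eqxx ?orbT.
Qed.

Lemma partial_coloring_cons_of : partial_coloring (y :: ys) c'.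
Proof.
have [c_c0 _ c_proper] := c_partial.
split; [| exact: injective_cnbhd_cons |].
  by move=> z Nxz; rewrite (c'_cnbhd (mem_head x ys)) ?c_c0.
have pre_cons : precolored (y :: ys) = outer_nbhd y :|: precolored ys.
  by rewrite /precolored /outer_union big_cons setUCA.
have new_edge a v : a \in outer_nbhd y -> v \in precolored (y :: ys) -> e a v ->
    c' a != c' v.
  move=> Oa; have eya : e y a by move: Oa; rewrite !inE => /andP[].
  rewrite pre_cons => /setUP[Ov | /setUP[Nxv | Uv]] eav.
  - by case: (no_triangle eya eav); move: Ov; rewrite !inE e_sym => /andP[].
  - have [eq_vy | neq_vy] := eqVneq v y.
      rewrite eq_vy in eav *; apply: (contra_neq _ (adj_neq eav)).
      apply: (injective_cnbhd_cons (mem_head y ys)); last by rewrite !inE eqxx.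
      exact: (subsetP (outer_nbhd_sub y)).
    have Nva : a \in cnbhd e v by rewrite !inE e_sym eav orbT.
    by rewrite (negbTE (notin_outer Nxv neq_vy Nva)) in Oa.
  - rewrite (c'_precolored (z := v)); last by rewrite inE Uv orbT.
    by apply: contraNneq (c'_free Oa) => ->; apply/exists_inP; exists v; rewrite // eav eqxx.
move=> u v Pu Pv euv.
have [Ou | nOu] := boolP (u \in outer_nbhd y); first exact: new_edge.
have [Ov | nOv] := boolP (v \in outer_nbhd y).
  by rewrite eq_sym; apply: new_edge; rewrite // e_sym.
move: Pu Pv; rewrite pre_cons => /setUP[Ou | Pu]; first by rewrite Ou in nOu.
case/setUP => [Ov | Pv]; first by rewrite Ov in nOv.
by rewrite !c'_precolored //; apply: c_proper.
Qed.

End Repaired.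

Lemma partial_coloring_cons :
  (size ys).*2 < d -> exists c', partial_coloring (y :: ys) c'.
Proof.
move=> small_ys.
have cardA : #|outer_nbhd y| = d.-1 by apply: card_outer_nbhd.
have cardB : #|~: [set c0 x; c0 y]| = d.-1.
  have neq_c0 : c0 x != c0 y by apply: contra_neq neq_xy; apply: c0_inj.
  by move: (cardsC [set c0 x; c0 y]); rewrite cards2 neq_c0 card_ord; lia.
have [f f_inj f_new] := exists_inj_in (c0 x) (eq_leq (etrans cardA (esym cardB))).
pose c1 z := if z \in outer_nbhd y then f z else c z.
have c1_inj : {in outer_nbhd y &, injective c1}.
  by move=> u v Ou Ov; rewrite /c1 Ou Ov; apply: f_inj.
have large_A : (size ys).*2 <= #|outer_nbhd y| by rewrite cardA; lia.
have [c' [c'_inj c'_out c'_im c'_free]] :=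
  repair_injection large_A card_conflict_colors card_conflict_vertices c1_inj.
exists c'; apply: partial_coloring_cons_of => // [z nOz | a Oa].
  by rewrite c'_out // /c1 (negbTE nOz).
have /imsetP[a' Oa' ->] := c'_im a Oa.
by rewrite /c1 Oa'; move: (f_new a' Oa'); rewrite inE.
Qed.

End Step.

Lemma cnbhd_sub_precolored ys v :
  {subset ys <= nbhd e x} -> v \in x :: ys -> cnbhd e v \subset precolored ys.
Proof.
move=> ys_nbhd; rewrite in_cons => /predU1P[-> | ys_v]; first exact: subsetUl.
have exv : e x v by have := ys_nbhd v ys_v; rewrite inE.
rewrite (cnbhd_outer exv); apply: setUSS.
  by apply/subsetP => z /set2P[] ->; rewrite !inE ?eqxx ?exv ?orbT.
by rewrite /outer_union bigcup_seq (bigcup_sup v).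
Qed.

Lemma partial_coloring_injective ys c :
  partial_coloring ys c -> {in x :: ys, forall v, {in cnbhd e v &, injective c}}.
Proof.
case=> c_c0 c_inj _ v; rewrite in_cons => /predU1P[-> | ys_v]; last exact: c_inj.
by move=> u w Nu Nw; rewrite !c_c0 //; apply: c0_inj.
Qed.

Lemma extend_partial_coloring ys c :
  {subset ys <= nbhd e x} -> partial_coloring ys c ->
  exists2 c' : T -> 'I_d.+1, proper_coloring e c' & {in x :: ys, forall v, b_vertex e c' v}.
Proof.
move=> ys_nbhd c_partial; have [_ _ c_proper] := c_partial.
have deg_lt v : #|nbhd e v| < d.+1 by rewrite e_reg.
have [c' c'_proper c'_c] := extend_proper_coloring e_sym e_irr deg_lt c_proper.
exists c' => // v xys_v; apply: b_vertex_of_injective (e_reg v) _ => u w Nu Nw.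
have sub_pre := cnbhd_sub_precolored ys_nbhd xys_v.
rewrite !c'_c ?(subsetP sub_pre) //.
exact: (partial_coloring_injective c_partial xys_v).
Qed.

Lemma exists_partial_coloring ys :
  uniq ys -> {subset ys <= nbhd e x} -> (size ys).-1.*2 < d ->
  exists c, partial_coloring ys c.
Proof.
elim: ys => [|y ys IHys] /=; first by exists c0; apply: partial_coloring_nil.
case/andP=> y_notin uniq_ys sub_ys small_ys.
have ys_nbhd : {subset ys <= nbhd e x} by move=> z ys_z; apply: sub_ys; rewrite in_cons ys_z orbT.
have exy : e x y by have := sub_ys y (mem_head y ys); rewrite inE.
have small_ys' : (size ys).-1.*2 < d by apply: leq_ltn_trans small_ys; rewrite leq_double leq_pred.
have [c c_partial] := IHys uniq_ys ys_nbhd small_ys'.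
exact: (partial_coloring_cons exy ys_nbhd y_notin c_partial).
Qed.

End PartialColoring.

End AroundVertex.

End Girth5.

Theorem mainTheorem2 (d : nat) (T : finType) (e : rel T) :
  7 <= d -> simple_graph e -> regular e d -> girth_ge e 5 ->
  forall x : T, exists c : T -> 'I_d.+1,
    [/\ proper_coloring e c, b_vertex e c x &
        exists S : {set T}, [/\ S \subset nbhd e x, 4 <= #|S| &
                               forall v, v \in S -> b_vertex e c v]].
Proof.
move=> d_ge7 [e_sym e_irr] e_reg girth5 x.
have card_cnbhd : #|cnbhd e x| <= #|[set: 'I_d.+1]|.
  by rewrite cardsT card_ord /cnbhd cardsU1 e_reg inE e_irr.
have [c0 c0_inj _] := exists_inj_in ord0 card_cnbhd.
pose ys := take 4 (enum (nbhd e x)).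
have uniq_ys : uniq ys by rewrite take_uniq ?enum_uniq.
have ys_nbhd : {subset ys <= nbhd e x} by move=> z /mem_take; rewrite mem_enum.
have size_ys : size ys = 4 by rewrite size_takel // -cardE e_reg (leq_trans _ d_ge7).
have small_ys : (size ys).-1.*2 < d by rewrite size_ys.
have [c c_partial] :=
  exists_partial_coloring e_sym e_irr girth5 e_reg c0_inj uniq_ys ys_nbhd small_ys.
have [c' c'_proper c'_b] := extend_partial_coloring e_sym e_irr e_reg c0_inj ys_nbhd c_partial.
exists c'; split; [done | exact: c'_b (mem_head x ys) |].
exists [set y in ys]; split.
- by apply/subsetP => z; rewrite inE; apply: ys_nbhd.
- by rewrite cardsE (card_uniqP uniq_ys) size_ys.
by move=> v; rewrite inE => ys_v; apply: c'_b; rewrite in_cons ys_v orbT.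
Qed.
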